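(* Let $\sigma$ be a signature containing $\triangleright$, let $\mathcal{A}$ be a $\sigma$-algebra and let $\theta$ be a representation of $\mathcal{A}$ by partial functions. If $\theta$ is locally complete, then $\theta$ is join complete.
   Context: Signatures $\sigma$ are sets of operation symbols drawn from: $\triangleright$ (antidomain restriction), $;$ (composition), $\wedge$ (intersection), $\mathrm{upd}$ (update), $\sqcup$ (preferential union), $\mathsf{D}$ (domain), $\mathsf{A}$ (antidomain), interpreted on partial functions as: $f \triangleright g = \{(x,y) \in g : x \notin \mathrm{dom}(f)\}$; $f;g$ = relational composition ($f$ first); $f\wedge g = f\cap g$; $\mathrm{upd}(f,g)(x)$ is $f(x)$ if $f(x)$ defined and $g(x)$ undefined, $g(x)$ if both defined, undefined otherwise; $(f\sqcup g)(x)$ is $f(x)$ if defined, else $g(x)$; $\mathsf{D}(f)$ = identity on $\mathrm{dom}(f)$; $\mathsf{A}(f)$ = identity on the complement of $\mathrm{dom}(f)$ in the base. A representation by partial functions is an isomorphism onto a $\sigma$-algebra of partial functions with these operations. Define $0 := a\triangleright a$, $a\lhd b := (a\triangleright b)\triangleright b$, $a \le b :\iff a\lhd b = a$; for representable algebras this is a partial order and $a\le b \iff \theta(a)\subseteq\theta(b)$ for any representation $\theta$. For representable $\mathcal{A}$ and $a\in\mathcal{A}$, ${\downarrow}a=\{b : b\le a\}$ is a Boolean algebra with bottom $0$, top $a$, meet $\lhd$ and complement $b\mapsto b\triangleright a$, and $\theta$ restricts to a representation of it as a field of sets over $\theta(a)$. $\theta$ is locally complete if for every $a$ this restriction is a complete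 representation of ${\downarrow}a$ (preserves all existing joins as unions and existing meets of nonempty sets as intersections). $\theta$ is join complete if for every $S \subseteq \mathcal{A}$ with $\bigvee S$ existing in $(\mathcal{A},\le)$, $\theta(\bigvee S)=\bigcup\theta[S]$. *)

(* Partial functions on a base X are represented as functional
   binary relations X -> X -> Prop; equality of partial functions is
   extensional equality of graphs. *)

Inductive symbol : Type :=
  | SAnte
  | SComp
  | SMeet
  | SUpd
  | SPref
  | SDom
  | SAdom.

Definition signature := symbol -> Prop.

(** Operations of an algebra over carrier [A].  An algebra of signature
    [sigma] only uses the operations whose symbol lies in [sigma]; the other
    fields are ignored (see [representation]). *)
Record ops (A : Type) : Type := Ops {
  o_ante : A -> A -> A;
  o_comp : A -> A -> A;
  o_meet : A -> A -> A;
  o_upd  : A -> A -> A;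
  o_pref : A -> A -> A;
  o_dom  : A -> A;
  o_adom : A -> A }.
Arguments o_ante {A} _ _ _.
Arguments o_comp {A} _ _ _.
Arguments o_meet {A} _ _ _.
Arguments o_upd  {A} _ _ _.
Arguments o_pref {A} _ _ _.
Arguments o_dom  {A} _ _.
Arguments o_adom {A} _ _.

Section PFun.
Variable X : Type.
Definition pfun := X -> X -> Prop.

Definition functional (f : pfun) : Prop :=
  forall x y z, f x y -> f x z -> y = z.

Definition defined (f : pfun) (x : X) : Prop := exists y, f x y.

Definition pf_eq (f g : pfun) : Prop := forall x y, f x y <-> g x y.
Definition pf_sub (f g : pfun) : Prop := forall x y, f x y -> g x y.

Definition pf_ante (f g : pfun) : pfun := fun x y => g x y /\ ~ defined f x.
Definition pf_comp (f g : pfun) : pfun := fun x y => exists z, f x z /\ g z y.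
Definition pf_meet (f g : pfun) : pfun := fun x y => f x y /\ g x y.
Definition pf_upd (f g : pfun) : pfun := fun x y =>
  (f x y /\ ~ defined g x) \/ (g x y /\ defined f x).
Definition pf_pref (f g : pfun) : pfun := fun x y =>
  f x y \/ (g x y /\ ~ defined f x).
Definition pf_dom (f : pfun) : pfun := fun x y => x = y /\ defined f x.
Definition pf_adom (f : pfun) : pfun := fun x y => x = y /\ ~ defined f x.
End PFun.
Arguments functional {X} _.
Arguments defined {X} _ _.
Arguments pf_eq {X} _ _.
Arguments pf_sub {X} _ _.
Arguments pf_ante {X} _ _ _ _.
Arguments pf_comp {X} _ _ _ _.
Arguments pf_meet {X} _ _ _ _.
Arguments pf_upd {X} _ _ _ _.
Arguments pf_pref {X} _ _ _ _.
Arguments pf_dom {X} _ _ _.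
Arguments pf_adom {X} _ _ _.

Definition representation (sigma : signature) {A : Type} (O : ops A)
    {X : Type} (theta : A -> pfun X) : Prop :=
  (forall a, functional (theta a)) /\
  (forall a b, pf_eq (theta a) (theta b) -> a = b) /\
  (sigma SAnte -> forall a b,
      pf_eq (theta (o_ante O a b)) (pf_ante (theta a) (theta b))) /\
  (sigma SComp -> forall a b,
      pf_eq (theta (o_comp O a b)) (pf_comp (theta a) (theta b))) /\
  (sigma SMeet -> forall a b,
      pf_eq (theta (o_meet O a b)) (pf_meet (theta a) (theta b))) /\
  (sigma SUpd -> forall a b,
      pf_eq (theta (o_upd O a b)) (pf_upd (theta a) (theta b))) /\
  (sigma SPref -> forall a b,
      pf_eq (theta (o_pref O a b)) (pf_pref (theta a) (theta b))) /\
  (sigma SDom -> forall a,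
      pf_eq (theta (o_dom O a)) (pf_dom (theta a))) /\
  (sigma SAdom -> forall a,
      pf_eq (theta (o_adom O a)) (pf_adom (theta a))).

Definition alg_lhd {A : Type} (O : ops A) (a b : A) : A :=
  o_ante O (o_ante O a b) b.
Definition alg_le {A : Type} (O : ops A) (a b : A) : Prop :=
  alg_lhd O a b = a.

Definition is_join_in {A : Type} (O : ops A) (P S : A -> Prop) (j : A) : Prop :=
  P j /\ (forall s, S s -> alg_le O s j) /\
  (forall u, P u -> (forall s, S s -> alg_le O s u) -> alg_le O j u).

Definition is_meet_in {A : Type} (O : ops A) (P S : A -> Prop) (m : A) : Prop :=
  P m /\ (forall s, S s -> alg_le O m s) /\
  (forall u, P u -> (forall s, S s -> alg_le O u s) -> alg_le O u m).

Definition down {A : Type} (O : ops A) (a : A) : A -> Prop :=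
  fun b => alg_le O b a.

Definition locally_complete {A : Type} (O : ops A) {X : Type}
    (theta : A -> pfun X) : Prop :=
  forall a : A,
    (forall (S : A -> Prop) (j : A),
        (forall s, S s -> down O a s) ->
        is_join_in O (down O a) S j ->
        forall x y, theta j x y <-> exists s, S s /\ theta s x y) /\
    (forall (S : A -> Prop) (m : A),
        (forall s, S s -> down O a s) ->
        (exists s, S s) ->
        is_meet_in O (down O a) S m ->
        forall x y, theta m x y <-> forall s, S s -> theta s x y).

Definition join_complete {A : Type} (O : ops A) {X : Type}
    (theta : A -> pfun X) : Prop :=
  forall (S : A -> Prop) (j : A),
    is_join_in O (fun _ => True) S j ->
    forall x y, theta j x y <-> exists s, S s /\ theta s x y.


(* Let j be the join of S in the whole algebra (A, <=).  Every
   element of S lies below j, so S is a subset of the Boolean algebra down j.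
   Since j <= j, j itself belongs to down j, and a least upper bound in a
   poset remains a least upper bound in any subset that contains it; hence j
   is also the join of S inside down j.  Local completeness at j then says
   that theta j is the union of the theta s, s in S.

   The only ingredient that needs the representation is reflexivity of the
   derived order: theta (a |> a) is empty, so theta ((a |> a) |> a) equals
   theta a, and injectivity of theta gives (a |> a) |> a = a. *)

Section AntidomainRestriction.

Variables (sigma : signature) (A : Type) (O : ops A) (X : Type)
          (theta : A -> pfun X).
Hypothesis Hrep : representation sigma O theta.
Hypothesis Hsig : sigma SAnte.

Lemma rep_ante (a b : A) (x y : X) :
  theta (o_ante O a b) x y <-> theta b x y /\ ~ defined (theta a) x.
Proof.
  destruct Hrep as [_ [_ [Hante _]]].
  exact (Hante Hsig a b x y).
Qed.

Lemma rep_ante_self_empty (a : A) (x y : X) : ~ theta (o_ante O a a) x y.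
Proof.
  intros Hxy. apply rep_ante in Hxy. destruct Hxy as [Hay Hndef].
  apply Hndef. exists y. exact Hay.
Qed.

Lemma alg_le_refl (a : A) : alg_le O a a.
Proof.
  destruct Hrep as [_ [Hinj _]].
  unfold alg_le, alg_lhd. apply Hinj. intros x y.
  split.
  - intros Hxy. exact (proj1 (proj1 (rep_ante _ _ x y) Hxy)).
  - intros Hay. apply rep_ante. split; [exact Hay |].
    intros [z Hz]. exact (rep_ante_self_empty a x z Hz).
Qed.

End AntidomainRestriction.

Lemma is_join_in_restrict {A : Type} (O : ops A) (P S : A -> Prop) (j : A) :
  is_join_in O (fun _ => True) S j -> P j -> is_join_in O P S j.
Proof.
  intros [_ [Hub Hleast]] HPj.
  split; [exact HPj |]. split; [exact Hub |].
  intros u _ Hu. exact (Hleast u I Hu).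
Qed.

Theorem lemma3p5 (sigma : signature) (Hsig : sigma SAnte)
    (A : Type) (O : ops A) (X : Type) (theta : A -> pfun X)
    (Hrep : representation sigma O theta) :
  locally_complete O theta -> join_complete O theta.
Proof.
  intros LC S j Hjoin.
  assert (HS_below : forall s, S s -> down O j s)
    by (intros s Hs; exact (proj1 (proj2 Hjoin) s Hs)).
  assert (Hjoin_down : is_join_in O (down O j) S j).
  { apply is_join_in_restrict; [exact Hjoin |].
    exact (alg_le_refl sigma A O X theta Hrep Hsig j). }
  exact (proj1 (LC j) S j HS_below Hjoin_down).
Qed.
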